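(* For every $d\ge1$, $$G_{\mathbb C}.(\Xi_+\times\Xi_+)=\{(z,w)\in\mathrm{dS}^d_{\mathbb C}\times\mathrm{dS}^d_{\mathbb C}\;:\;\beta(z,\overline w)\notin(-\infty,-1]\},$$ where $G_{\mathbb C}$ acts on pairs by $g.(z,w)=(gz,\overline g\,w)$.
   Context: Let $d\ge1$. On $\mathbb C^{1+d}$ let $\beta(z,w)=z_0w_0-z_1w_1-\dots-z_dw_d$, let $\overline z$ denote coordinatewise complex conjugation, $V=\mathbb R^{1+d}$, $V_+=\{x\in V:x_0>0,\beta(x,x)>0\}$, $\mathrm{dS}^d_{\mathbb C}=\{z:\beta(z,z)=-1\}$, $\Xi_+=\mathrm{dS}^d_{\mathbb C}\cap(V+iV_+)$. Let $G_{\mathbb C}=\mathrm{SO}_{1+d}(\mathbb C)$ be the determinant-one complex linear maps preserving $\beta$, and for $g\in G_{\mathbb C}$ let $\overline g$ be its entrywise complex conjugate (again in $G_{\mathbb C}$). *)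

From HB Require Import structures.
From mathcomp Require Import all_boot all_order all_algebra.
From mathcomp Require Import complex.
From mathcomp Require Import reals.
Set Implicit Arguments. Unset Strict Implicit. Unset Printing Implicit Defensive.
Import Order.TTheory GRing.Theory Num.Theory.
Local Open Scope ring_scope.
Local Open Scope complex_scope.

Section Defs.
Variables (R : realType) (d : nat).
Local Notation C := (R[i]).

(* Vectors of K^{1+d} are column vectors indexed by 'I_(1+d); index 0 is the
   "time" coordinate. *)

Definition betaC (z w : 'cV[C]_(1 + d)) : C :=
  z ord0 0 * w ord0 0 - \sum_(i < d) z (lift ord0 i) 0 * w (lift ord0 i) 0.

Definition betaR (x y : 'cV[R]_(1 + d)) : R :=
  x ord0 0 * y ord0 0 - \sum_(i < d) x (lift ord0 i) 0 * y (lift ord0 i) 0.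

Definition conjv (z : 'cV[C]_(1 + d)) : 'cV[C]_(1 + d) := map_mx (fun c : C => c^*) z.
Definition conjm (g : 'M[C]_(1 + d)) : 'M[C]_(1 + d) := map_mx (fun c : C => c^*) g.

Definition Rev (z : 'cV[C]_(1 + d)) : 'cV[R]_(1 + d) := map_mx (@complex.Re R) z.
Definition Imv (z : 'cV[C]_(1 + d)) : 'cV[R]_(1 + d) := map_mx (@complex.Im R) z.

Definition Vplus (x : 'cV[R]_(1 + d)) : Prop := 0 < x ord0 0 /\ 0 < betaR x x.

Definition dSC (z : 'cV[C]_(1 + d)) : Prop := betaC z z = -1.

Definition XiPlus (z : 'cV[C]_(1 + d)) : Prop := dSC z /\ Vplus (Imv z).

Definition SOC (g : 'M[C]_(1 + d)) : Prop :=
  \det g = 1 /\ forall z w : 'cV[C]_(1 + d), betaC (g *m z) (g *m w) = betaC z w.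

Definition in_half_line (c : C) : Prop := complex.Im c = 0 /\ complex.Re c <= -1.

End Defs.

(* For z, w in Xi_+ put v = z - conj w: then Im v = Im z + Im w is future timelike and
   beta(v, v) = -2 - 2 beta(z, conj w).  If beta(z, conj w) were real, Re v would be
   beta-orthogonal to Im v, hence spacelike, so beta(v, v) would be a negative real,
   i.e. beta(z, conj w) > -1.  As beta(g z, conj (conj g w)) = beta(z, conj w), this
   gives one inclusion.  Conversely, with u = conj w, reflections move z to i e_0 and
   then u, keeping i e_0 fixed, into the (e_0, e_1)-plane; there a reflection acting on
   light-cone coordinates by (p, q) |-> (mu q, p / mu) with Re mu > 0 puts the pair into
   Xi_+ x conj Xi_+, and beta(z, u) not in (-oo, -1] is exactly what allows choosing mu.
   The degenerate case u_0 = -i takes a single reflection, and composing with the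
   reflection x_1 |-> -x_1, which preserves Xi_+, makes the determinant 1. *)

From HB Require Import structures.
From mathcomp Require Import all_boot all_order all_algebra.
From mathcomp Require Import complex.
From mathcomp Require Import reals.
From mathcomp Require Import ring lra.
Set Implicit Arguments. Unset Strict Implicit. Unset Printing Implicit Defensive.
Import Order.TTheory GRing.Theory Num.Theory.
Local Open Scope ring_scope.
Local Open Scope complex_scope.

Section MinkowskiForm.
Variables (K : comPzRingType) (d : nat).
Implicit Types (x y z : 'cV[K]_(1 + d)) (g h : 'M[K]_(1 + d)).

Definition mdot x y : K :=
  x ord0 0 * y ord0 0 - \sum_(i < d) x (lift ord0 i) 0 * y (lift ord0 i) 0.

Lemma mdotC x y : mdot x y = mdot y x.
Proof. by rewrite /mdot mulrC; congr (_ - _); apply: eq_bigr => i _; rewrite mulrC. Qed.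

Lemma mdotDl x y z : mdot (x + y) z = mdot x z + mdot y z.
Proof.
rewrite /mdot !mxE (eq_bigr (fun i => x (lift ord0 i) 0 * z (lift ord0 i) 0
  + y (lift ord0 i) 0 * z (lift ord0 i) 0)) ?big_split /=; first by ring.
by move=> i _; rewrite mxE mulrDl.
Qed.

Lemma mdotZl a x z : mdot (a *: x) z = a * mdot x z.
Proof.
rewrite /mdot !mxE mulrBr mulr_sumr -mulrA; congr (_ - _).
by apply: eq_bigr => i _; rewrite mxE mulrA.
Qed.

Lemma mdotNl x z : mdot (- x) z = - mdot x z.
Proof. by rewrite -scaleN1r mdotZl mulN1r. Qed.

Lemma mdotBl x y z : mdot (x - y) z = mdot x z - mdot y z.
Proof. by rewrite mdotDl mdotNl. Qed.

Lemma mdotDr x y z : mdot z (x + y) = mdot z x + mdot z y.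
Proof. by rewrite mdotC mdotDl !(mdotC z). Qed.

Lemma mdotZr a x z : mdot z (a *: x) = a * mdot z x.
Proof. by rewrite mdotC mdotZl mdotC. Qed.

Lemma mdotNr x z : mdot z (- x) = - mdot z x.
Proof. by rewrite mdotC mdotNl mdotC. Qed.

Lemma mdotBr x y z : mdot z (x - y) = mdot z x - mdot z y.
Proof. by rewrite mdotC mdotBl !(mdotC z). Qed.

Lemma mdotBB x y : mdot (x - y) (x - y) = mdot x x - 2 * mdot x y + mdot y y.
Proof. rewrite mdotBl !mdotBr (mdotC y x); ring. Qed.

Lemma mdotDD x y : mdot (x + y) (x + y) = mdot x x + 2 * mdot x y + mdot y y.
Proof. rewrite mdotDl !mdotDr (mdotC y x); ring. Qed.

Definition preserves_mdot h := forall x y, mdot (h *m x) (h *m y) = mdot x y.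

Lemma preserves_mdot1 : preserves_mdot 1%:M.
Proof. by move=> x y; rewrite !mul1mx. Qed.

Lemma preserves_mdotM g h :
  preserves_mdot g -> preserves_mdot h -> preserves_mdot (g *m h).
Proof. by move=> Hg Hh x y; rewrite -!mulmxA Hg Hh. Qed.

End MinkowskiForm.

Section Lorentz.
Variables (F : realFieldType) (d : nat).
Implicit Types x y : 'cV[F]_(1 + d).

Lemma mdot_spacelike x : x ord0 0 = 0 -> mdot x x <= 0.
Proof.
move=> x0; rewrite /mdot x0 mul0r sub0r oppr_le0.
by apply: sumr_ge0 => i _; rewrite -expr2 sqr_ge0.
Qed.

(* Both inequalities: kill the time coordinate by subtracting a multiple of one vector
   and apply [mdot_spacelike]. *)
Lemma mdot_orth_timelike x y : 0 < mdot y y -> mdot x y = 0 -> mdot x x <= 0.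
Proof.
move=> yy xy.
have y0 : y ord0 0 != 0 by apply: contraTneq yy => /mdot_spacelike; rewrite leNgt.
set t := x ord0 0 / y ord0 0.
have /mdot_spacelike : (x - t *: y) ord0 0 = 0 by rewrite !mxE /t divfK // subrr.
rewrite mdotBB mdotZr mdotZl mdotZr xy.
have : 0 <= t * t * mdot y y by apply: mulr_ge0; [rewrite -expr2 sqr_ge0 | exact: ltW].
nra.
Qed.

Lemma mdot_future_gt0 x y : 0 < x ord0 0 -> 0 < mdot x x ->
  0 < y ord0 0 -> 0 < mdot y y -> 0 < mdot x y.
Proof.
move=> x0 xx y0 yy; set t := y ord0 0 / x ord0 0.
have t0 : 0 < t by rewrite divr_gt0.
have /mdot_spacelike : (y - t *: x) ord0 0 = 0.
  by rewrite !mxE /t divfK ?gt_eqF // subrr.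
rewrite mdotBB mdotZr mdotZl mdotZr (mdotC y x).
have : 0 <= t * t * mdot x x by apply: mulr_ge0; [rewrite -expr2 sqr_ge0 | exact: ltW].
nra.
Qed.

End Lorentz.

Section Reflections.
Variables (K : numFieldType) (d : nat).
Implicit Types (x y p q v : 'cV[K]_(1 + d)) (h : 'M[K]_(1 + d)).

Definition mdot_mx : 'M[K]_(1 + d) := diag_mx (\row_i (if i == ord0 then 1 else -1)).

Lemma mdot_mxE x y : mdot x y = (x^T *m mdot_mx *m y) 0 0.
Proof.
rewrite /mdot mul_mx_diag !mxE big_ord_recl !mxE eqxx mulr1 -sumrN; congr (_ + _).
apply: eq_bigr => i _; rewrite !mxE eq_sym (negbTE (neq_lift ord0 i)).
by rewrite mulrN1 mulNr.
Qed.

Lemma preserves_mdot_mx h : preserves_mdot h -> h^T *m mdot_mx *m h = mdot_mx.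
Proof.
have entry (A : 'M[K]_(1 + d)) i j :
    A i j = ((delta_mx i 0 : 'cV_(1 + d))^T *m A *m (delta_mx j 0 : 'cV_(1 + d))) 0 0.
  by rewrite trmx_delta -rowE -colE !mxE.
move=> Hh; apply/matrixP => i j; rewrite entry [RHS]entry -mdot_mxE -Hh mdot_mxE.
by rewrite trmx_mul !mulmxA.
Qed.

Lemma det_preserves_mdot h : preserves_mdot h -> \det h ^+ 2 = 1.
Proof.
have detJ : \det mdot_mx != 0.
  rewrite det_diag; apply/prodf_neq0 => i _; rewrite mxE.
  by case: ifP; rewrite ?oppr_eq0 oner_eq0.
move=> /preserves_mdot_mx /(congr1 determinant); rewrite !det_mulmx det_tr => e.
by apply: (mulIf detJ); rewrite mul1r -[in RHS]e expr2 mulrAC.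
Qed.

Definition reflection v : 'M[K]_(1 + d) :=
  1%:M - (2 / mdot v v) *: (v *m (v^T *m mdot_mx)).

Lemma reflectionE v x : reflection v *m x = x - (2 / mdot v v * mdot v x) *: v.
Proof.
rewrite mulmxBl mul1mx -scalemxAl -!mulmxA [v^T *m _]mx11_scalar mul_mx_scalar.
by rewrite scalerA mulmxA -mdot_mxE.
Qed.

Lemma preserves_mdot_reflection v : mdot v v != 0 -> preserves_mdot (reflection v).
Proof.
move=> vv x y; rewrite !reflectionE mdotBl !mdotBr !mdotZl !mdotZr !(mdotC v).
by field.
Qed.

Lemma reflection_fix v x : mdot v x = 0 -> reflection v *m x = x.
Proof. by move=> vx; rewrite reflectionE vx mulr0 scale0r subr0. Qed.

Lemma reflection_swap p q :
  mdot p p = mdot q q -> mdot (p - q) (p - q) != 0 -> reflection (p - q) *m p = q.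
Proof.
move=> pq nz; rewrite reflectionE.
have -> : 2 / mdot (p - q) (p - q) * mdot (p - q) p = 1.
  by move: nz; rewrite mdotBB mdotBl pq (mdotC q p) => nz; field.
by rewrite scale1r opprB addrC subrK.
Qed.

Lemma reflection_swap_fix p q x : mdot p p = mdot q q ->
  mdot (p - q) (p - q) != 0 -> mdot (p - q) x = 0 ->
  exists h, [/\ preserves_mdot h, h *m p = q & h *m x = x].
Proof.
move=> pq nz px; exists (reflection (p - q)).
by split; [exact: preserves_mdot_reflection | exact: reflection_swap | exact: reflection_fix].
Qed.

(* The standard proof of Witt's theorem for one vector: if [p - q] is isotropic then
   [p + q] is not, and the reflection in [p + q] sends [p] to [-q]. *)
Lemma mdot_transitive p q :
  mdot p p = mdot q q -> mdot q q != 0 -> exists h, preserves_mdot h /\ h *m p = q.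
Proof.
move=> pq qq; have [nz|z] := eqVneq (mdot (p - q) (p - q)) 0; last first.
  by exists (reflection (p - q)); split; [exact: preserves_mdot_reflection | exact: reflection_swap].
have nz' : mdot (p + q) (p + q) != 0.
  have -> : mdot (p + q) (p + q) = 4 * mdot q q - mdot (p - q) (p - q).
    by rewrite mdotDD mdotBB pq; ring.
  by rewrite nz subr0 mulf_neq0 // pnatr_eq0.
have to_opp : reflection (p + q) *m p = - q.
  rewrite -[q in p + q]opprK reflection_swap //; first by rewrite mdotNl mdotNr opprK.
  by rewrite opprK.
exists (reflection q *m reflection (p + q)); split.
  by apply: preserves_mdotM; apply: preserves_mdot_reflection.
by rewrite -mulmxA to_opp mulmxN reflectionE divfK // scaler_nat mulr2n opprB addrK.
Qed.
End Reflections.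

Definition i1 {n} : 'I_(1 + n.+1) := lift ord0 ord0.

Lemma lift0_neq0 m (j : 'I_m) : (lift ord0 j == ord0) = false.
Proof. by rewrite eq_sym (negbTE (neq_lift ord0 j)). Qed.

Section Flip.
Variables (K : comPzRingType) (n : nat).

Definition flip1 : 'M[K]_(1 + n.+1) := diag_mx (\row_i (if i == i1 then -1 else 1)).

Lemma flip1E (x : 'cV[K]_(1 + n.+1)) i :
  (flip1 *m x) i 0 = (if i == i1 then -1 else 1) * x i 0.
Proof. by rewrite mul_diag_mx !mxE. Qed.

Lemma preserves_mdot_flip1 : preserves_mdot flip1.
Proof.
move=> x y; rewrite /mdot !flip1E [ord0 == _]eq_sym lift0_neq0 !mul1r; congr (_ - _).
by apply: eq_bigr => i _; rewrite !flip1E mulrACA; case: ifP; rewrite ?mulrNN !mul1r.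
Qed.

Lemma det_flip1 : \det flip1 = -1.
Proof.
rewrite det_diag (bigD1 i1) //= big1 ?mulr1 => [|i /negbTE i_neq1]; rewrite mxE ?eqxx //.
by rewrite i_neq1.
Qed.

End Flip.
Arguments flip1 {K n}.

Section LightCone.
Variables (K : numFieldType) (n : nat).
Implicit Types (x : 'cV[K]_(1 + n.+1)) (p q k mu : K).

(* [p] and [q] are the light-cone coordinates [x_0 + x_1] and [x_0 - x_1]. *)
Definition lcvec p q : 'cV[K]_(1 + n.+1) :=
  \col_i (if i == ord0 then (p + q) / 2 else if i == i1 then (p - q) / 2 else 0).

Lemma lcvec0 p q : lcvec p q ord0 0 = (p + q) / 2.
Proof. by rewrite mxE eqxx. Qed.

Lemma lcvec_lift p q j : lcvec p q (lift ord0 j) 0 = if j == ord0 then (p - q) / 2 else 0.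
Proof. by rewrite mxE lift0_neq0 (inj_eq (@lift_inj _ ord0)). Qed.

Lemma lcvec1 p q : lcvec p q i1 0 = (p - q) / 2.
Proof. exact: lcvec_lift. Qed.

Lemma mdot_lcvec x p q : mdot x (lcvec p q) = x ord0 0 * ((p + q) / 2) - x i1 0 * ((p - q) / 2).
Proof.
rewrite /mdot lcvec0 big_ord_recl lcvec_lift eqxx big1 ?addr0 // => j _.
by rewrite lcvec_lift lift0_neq0 mulr0.
Qed.

Lemma mdot_lcvec2 p q p' q' : mdot (lcvec p q) (lcvec p' q') = (p * q' + q * p') / 2.
Proof. by rewrite mdot_lcvec lcvec0 lcvec1; field. Qed.

Lemma lcvecDZ p q p' q' k : lcvec p q + k *: lcvec p' q' = lcvec (p + k * p') (q + k * q').
Proof.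
apply/matrixP => i j; rewrite !mxE.
by case: ifP => _; [|case: ifP => _]; rewrite ?mulr0 ?addr0 //; field.
Qed.

Definition boost mu : 'M[K]_(1 + n.+1) := reflection (lcvec mu (-1)).

Lemma mdot_boost mu : mdot (lcvec mu (-1)) (lcvec mu (-1)) = - mu.
Proof. by rewrite mdot_lcvec2; field. Qed.

Lemma preserves_mdot_boost mu : mu != 0 -> preserves_mdot (boost mu).
Proof. by move=> mu0; apply: preserves_mdot_reflection; rewrite mdot_boost oppr_eq0. Qed.

Lemma boost_lcvec mu p q : mu != 0 -> boost mu *m lcvec p q = lcvec (mu * q) (p / mu).
Proof.
move=> mu0; rewrite reflectionE mdot_boost mdot_lcvec2 -scaleNr lcvecDZ.
by congr lcvec; field.
Qed.

End LightCone.
Arguments lcvec {K n}.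
Arguments boost {K n}.

Section ComplexMinkowski.
Variables (R : realType) (d : nat).
Local Notation C := R[i].
Local Notation Re := (@complex.Re R).
Local Notation Im := (@complex.Im R).
Implicit Types (x y z w u v : 'cV[C]_(1 + d)) (g h : 'M[C]_(1 + d)).

Lemma betaCE x y : betaC x y = mdot x y. Proof. by []. Qed.

Lemma betaRE (x y : 'cV[R]_(1 + d)) : betaR x y = mdot x y. Proof. by []. Qed.

Lemma ReM (a b : C) : Re (a * b) = Re a * Re b - Im a * Im b.
Proof. by case: a => ? ?; case: b. Qed.

Lemma ImM (a b : C) : Im (a * b) = Re a * Im b + Im a * Re b.
Proof. by case: a => ? ?; case: b => ? ? /=; rewrite addrC. Qed.

Lemma Im_conjc (a : C) : Im a^* = - Im a.
Proof. by case: a. Qed.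

Lemma Re_mdot x y : Re (mdot x y) = mdot (Rev x) (Rev y) - mdot (Imv x) (Imv y).
Proof.
rewrite /mdot raddfB /= ReM raddf_sum /= !mxE.
rewrite (eq_bigr (fun i => Rev x (lift ord0 i) 0 * Rev y (lift ord0 i) 0
  - Imv x (lift ord0 i) 0 * Imv y (lift ord0 i) 0)) ?sumrB; first by ring.
by move=> i _; rewrite ReM !mxE.
Qed.

Lemma Im_mdot x y : Im (mdot x y) = mdot (Rev x) (Imv y) + mdot (Imv x) (Rev y).
Proof.
rewrite /mdot raddfB /= ImM raddf_sum /= !mxE.
rewrite (eq_bigr (fun i => Rev x (lift ord0 i) 0 * Imv y (lift ord0 i) 0
  + Imv x (lift ord0 i) 0 * Rev y (lift ord0 i) 0)) ?big_split /=; first by ring.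
by move=> i _; rewrite ImM !mxE.
Qed.

Lemma mdot_conjv x y : mdot (conjv x) (conjv y) = (mdot x y)^*.
Proof.
rewrite /mdot rmorphB rmorphM rmorph_sum !mxE; congr (_ - _).
by apply: eq_bigr => i _; rewrite !mxE rmorphM.
Qed.

Lemma conjvK : involutive (@conjv R d).
Proof. by move=> x; apply/matrixP => i j; rewrite !mxE conjcK. Qed.

Lemma conjm_mulmx g x : conjm g *m x = conjv (g *m conjv x).
Proof.
rewrite /conjv /conjm map_mxM -map_mx_comp; congr (_ *m _).
by apply/matrixP => i j; rewrite !mxE /= conjcK.
Qed.

Lemma dSC_conjv z : dSC z -> dSC (conjv z).
Proof. by rewrite /dSC !betaCE mdot_conjv => ->; rewrite rmorphN rmorph1. Qed.

Lemma dSC_mulmx h z : preserves_mdot h -> dSC z -> dSC (h *m z).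
Proof. by move=> Hh; rewrite /dSC !betaCE Hh. Qed.

Lemma Vplus_add (x y : 'cV[R]_(1 + d)) : Vplus x -> Vplus y -> Vplus (x + y).
Proof.
move=> [x0 xx] [y0 yy]; split; first by rewrite mxE addr_gt0.
have xy := mdot_future_gt0 x0 xx y0 yy.
by rewrite betaRE mdotDD; apply: addr_gt0 => //; apply: addr_gt0 => //; exact: mulr_gt0.
Qed.

(* If [Im v] is future timelike, [Re v] is orthogonal to it as soon as [mdot v v]
   is real, hence [Re v] is spacelike. *)
Lemma Re_mdot_self_lt0 v : Vplus (Imv v) -> Im (mdot v v) = 0 -> Re (mdot v v) < 0.
Proof.
move=> [_ Iv] /eqP; rewrite Im_mdot (mdotC (Imv v)) -mulr2n mulrn_eq0 /= => /eqP orth.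
by rewrite Re_mdot subr_lt0; apply: le_lt_trans (mdot_orth_timelike Iv orth) Iv.
Qed.

Lemma XiPlus_not_half_line z w : XiPlus z -> XiPlus w -> ~ in_half_line (betaC z (conjv w)).
Proof.
move=> [zz Iz] [ww Iw] [Im_c Re_c].
have Iv : Imv (z - conjv w) = Imv z + Imv w.
  by apply/matrixP => i j; rewrite !mxE raddfB /= Im_conjc opprK.
have vv : mdot (z - conjv w) (z - conjv w) = -2 - 2 * betaC z (conjv w).
  by rewrite mdotBB mdot_conjv -!betaCE ww zz rmorphN rmorph1; ring.
have := @Re_mdot_self_lt0 (z - conjv w); rewrite Iv vv => /(_ (Vplus_add Iz Iw)).
move: Im_c Re_c; case: (betaC z (conjv w)) => a b /= -> Ra.
rewrite !(mul0r, mulr0, add0r, addr0, subr0, oppr0) => /(_ erefl); lra.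
Qed.

Definition Xi_pair z u := XiPlus z /\ XiPlus (conjv u).

End ComplexMinkowski.

Section ComplexLightCone.
Variables (R : realType) (n : nat).
Local Notation C := R[i].
Local Notation Re := (@complex.Re R).
Local Notation Im := (@complex.Im R).
Implicit Types (x u : 'cV[C]_(1 + n.+1)) (p q a : C).

Lemma mulii : 'i * 'i = -1 :> C.
Proof. by rewrite -expr2 sqr_i. Qed.

Lemma invi : 'i^-1 = - 'i :> C.
Proof. by apply: mulr1_eq; rewrite mulrN mulii opprK. Qed.

Lemma Im_half a : Im (a / 2) = Im a / 2.
Proof. by case: a => ? ? /=; field. Qed.

Lemma conjc_half a : (a / 2)^* = a^* / 2.
Proof. by rewrite rmorphM fmorphV rmorph_nat. Qed.

Lemma Im_oppV a : Im (- a^-1) = Im a / (Re a ^+ 2 + Im a ^+ 2).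
Proof. by case: a => ? ? /=; rewrite opprK. Qed.

Lemma normc2_gt0 a : Im a != 0 -> 0 < Re a ^+ 2 + Im a ^+ 2.
Proof. by move=> Ia; rewrite ltr_wpDl ?sqr_ge0 // exprn_even_gt0. Qed.

Lemma Im_oppV_gt0 a : 0 < Im a -> 0 < Im (- a^-1).
Proof. by move=> Ia; rewrite Im_oppV divr_gt0 // normc2_gt0 // gt_eqF. Qed.

Lemma Im_oppV_lt0 a : Im a < 0 -> Im (- a^-1) < 0.
Proof. by move=> Ia; rewrite Im_oppV ltr_pdivrMr ?mul0r // normc2_gt0 // lt_eqF. Qed.

Lemma Imv_lcvec p q : Imv (lcvec p q : 'cV_(1 + n.+1)) = lcvec (Im p) (Im q).
Proof.
apply/matrixP => i j; rewrite !mxE.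
by case: ifP => _; [|case: ifP => _]; rewrite ?Im_half ?(raddfB, raddfD) /=.
Qed.

Lemma conjv_lcvec p q : conjv (lcvec p q : 'cV_(1 + n.+1)) = lcvec p^* q^*.
Proof.
apply/matrixP => i j; rewrite !mxE.
by case: ifP => _; [|case: ifP => _]; rewrite ?conjc_half ?(rmorphB, rmorphD) ?conjc0.
Qed.

Lemma Vplus_lcvec (a b : R) : 0 < a -> 0 < b -> Vplus (lcvec a b : 'cV_(1 + n.+1)).
Proof.
move=> a0 b0; split; first by rewrite lcvec0 divr_gt0 ?addr_gt0.
by rewrite betaRE mdot_lcvec2 divr_gt0 // addr_gt0 // mulr_gt0.
Qed.

Lemma XiPlus_lcvec p q :
  p * q = -1 -> 0 < Im p -> 0 < Im q -> XiPlus (lcvec p q : 'cV_(1 + n.+1)).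
Proof.
move=> pq p0 q0; split; last by rewrite Imv_lcvec; exact: Vplus_lcvec.
by rewrite /dSC betaCE mdot_lcvec2 (mulrC q) pq; field.
Qed.

Definition ie0 : 'cV[C]_(1 + n.+1) := lcvec 'i 'i.

Lemma XiPlus_ie0 : XiPlus ie0.
Proof. by apply: XiPlus_lcvec; rewrite ?mulii ?ltr01. Qed.

Lemma mdot_ie0 x : mdot ie0 x = 'i * x ord0 0.
Proof. by rewrite mdotC mdot_lcvec subrr mul0r mulr0 subr0; field. Qed.

(* For [Re M != 0] the slope of [mu] is free; for imaginary [M] the hypothesis
   forces [Im M < 0], since [M = b 'i] with [b > 0] gives [-(b + 1/b)/2 <= -1]. *)
Lemma exists_boost_parameter (M P : C) : M * P = -1 ->
  ~ in_half_line ('i * ((P + M) / 2)) -> exists mu, 0 < Re mu /\ Im (mu * M) < 0.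
Proof.
case: M => a b; case: P => p q [e1 e2] hc.
have [a0|a0] := eqVneq a 0; last first.
  by exists (1 +i* (- (b + 1) / a)); split; rewrite /= ?ltr01 // mul1r divfK //; lra.
subst a; exists 1; split; rewrite /= ?ltr01 // mul1r mul0r addr0.
rewrite ltNge; apply/negP => b0; apply: hc.
have bq : b * q = 1 by lra.
have b_gt0 : 0 < b.
  by rewrite lt_def b0 andbT; apply: contra_eqN bq => /eqP ->; rewrite mul0r eq_sym oner_eq0.
have p0 : p = 0.
  by move: e2; rewrite mul0r add0r oppr0 => /eqP; rewrite mulf_eq0 gt_eqF //= => /eqP.
have q_gt0 : 0 < q by nra.
subst p; have -> : 'i * ((0 +i* q + b*i) / 2) = (- ((q + b) / 2))%:C.
  by apply/eqP; rewrite eq_complex /=; apply/andP; split; apply/eqP; field.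
split => //=; have := sqr_ge0 (b - q); nra.
Qed.

Lemma boost_to_Xi_pair (M P : C) : M * P = -1 -> ~ in_half_line ('i * ((P + M) / 2)) ->
  exists h, preserves_mdot h /\ Xi_pair (h *m ie0) (h *m lcvec P M).
Proof.
move=> MP hc; have [mu [Re_mu Im_muM]] := exists_boost_parameter MP hc.
have mu0 : mu != 0 by apply: contraTneq Re_mu => ->; rewrite ltxx.
have M0 : M != 0 by apply: contra_eq_neq MP => ->; rewrite mul0r eq_sym oppr_eq0 oner_eq0.
have P_eq : P = - M^-1 by apply: (mulfI M0); rewrite MP mulrN mulfV.
exists (boost mu); split; first exact: preserves_mdot_boost.
rewrite /ie0 !boost_lcvec //; split.
  apply: XiPlus_lcvec.
  - by rewrite -mulii; field.
  - by rewrite ImiRe.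
  - have -> : 'i / mu = - (mu * 'i)^-1 by rewrite invfM invi mulrN opprK mulrC.
    by apply: Im_oppV_gt0; rewrite ImiRe.
rewrite conjv_lcvec; apply: XiPlus_lcvec.
- have -> : (mu * M)^* * (P / mu)^* = (M * P)^* by rewrite -rmorphM; congr conjc; field.
  by rewrite MP rmorphN rmorph1.
- by rewrite Im_conjc oppr_gt0.
- by rewrite Im_conjc oppr_gt0 P_eq mulNr -invfM mulrC; exact: Im_oppV_lt0.
Qed.

End ComplexLightCone.
Arguments ie0 {R n}.

Section StandardPosition.
Variables (R : realType) (n : nat).
Local Notation C := R[i].
Local Notation Re := (@complex.Re R).
Local Notation Im := (@complex.Im R).
Implicit Types (x u : 'cV[C]_(1 + n.+1)).

Lemma plane_reduction u : mdot u u = -1 -> u ord0 0 ^+ 2 + 1 != 0 ->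
  exists h P M, [/\ preserves_mdot h, h *m ie0 = ie0 & h *m u = lcvec P M].
Proof.
move=> uu nz.
have [s [ss s0 su]] : exists s, [/\ s ^+ 2 = u ord0 0 ^+ 2 + 1, s != 0 & s != u i1 0].
  have r0 : sqrtc (u ord0 0 ^+ 2 + 1) != 0 by rewrite sqrtc_eq0.
  have [r_u|] := eqVneq (sqrtc (u ord0 0 ^+ 2 + 1)) (u i1 0); last first.
    by exists (sqrtc (u ord0 0 ^+ 2 + 1)); rewrite sqr_sqrtc.
  by exists (- sqrtc (u ord0 0 ^+ 2 + 1)); rewrite sqrrN sqr_sqrtc oppr_eq0 -r_u eqNr.
set m : 'cV[C]_(1 + n.+1) := lcvec (u ord0 0 + s) (u ord0 0 - s).
have PM : (u ord0 0 + s) * (u ord0 0 - s) = -1 by rewrite mulrC -subr_sqr ss; ring.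
have mm : mdot m m = -1 by rewrite mdot_lcvec2 (mulrC (_ - _)) PM; field.
have um : mdot (u - m) (u - m) = -2 * s * (s - u i1 0).
  rewrite mdotBB uu mm mdot_lcvec.
  have -> : (u ord0 0 + s + (u ord0 0 - s)) / 2 = u ord0 0 by field.
  have -> : (u ord0 0 + s - (u ord0 0 - s)) / 2 = s by field.
  by rewrite -expr2 -[u ord0 0 ^+ 2](addrK 1) -ss; ring.
have [h [Hh hu hie]] : exists h, [/\ preserves_mdot h, h *m u = m & h *m ie0 = ie0].
  apply: reflection_swap_fix; first by rewrite uu mm.
    by rewrite um !mulf_neq0 ?oppr_eq0 ?pnatr_eq0 // subr_eq0.
  have m0 : m ord0 0 = u ord0 0 by rewrite lcvec0; field.
  by rewrite mdotC mdotBr !mdot_ie0 m0 subrr.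
by exists h, (u ord0 0 + s), (u ord0 0 - s).
Qed.

Lemma Xi_pair_nondegenerate u : mdot u u = -1 -> u ord0 0 ^+ 2 + 1 != 0 ->
  ~ in_half_line (mdot ie0 u) -> exists h, preserves_mdot h /\ Xi_pair (h *m ie0) (h *m u).
Proof.
move=> uu nz hc; have [h1 [P [M [H1 h1ie h1u]]]] := plane_reduction uu nz.
have MP : M * P = -1 by move: uu; rewrite -H1 h1u mdot_lcvec2 => <-; field.
have hc' : ~ in_half_line ('i * ((P + M) / 2)).
  by rewrite -(@lcvec0 _ n) -mdot_ie0 -h1u -h1ie H1.
have [h2 [H2 X]] := boost_to_Xi_pair n MP hc'.
by exists (h2 *m h1); split; [exact: preserves_mdotM | rewrite -!mulmxA h1ie h1u].
Qed.

Lemma Xi_pair_ie0 x : mdot x x = -1 -> x ord0 0 = - 'i ->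
  \sum_(j < n.+1) Im (x (lift ord0 j) 0) ^+ 2 < 1 -> Xi_pair ie0 x.
Proof.
move=> xx x0 small; split; first exact: XiPlus_ie0.
split; first exact: dSC_conjv.
split; first by rewrite !mxE x0 /= opprK ltr01.
rewrite betaRE /mdot !mxE x0 /= opprK mulr1 subr_gt0.
by under eq_bigr do rewrite !mxE Im_conjc mulrNN -expr2.
Qed.

Lemma isotropic_spatial u : mdot u u = -1 -> u ord0 0 = - 'i ->
  \sum_(j < n.+1) u (lift ord0 j) 0 * u (lift ord0 j) 0 = 0.
Proof.
move=> /eqP + u0; rewrite /mdot u0 mulrNN mulii -subr_eq0 addrAC subrr add0r oppr_eq0.
by move/eqP.
Qed.

Lemma mul_conjc (a : C) : a * a^* = (Re a ^+ 2 + Im a ^+ 2)%:C.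
Proof. by rewrite add_Re2_Im2 sqr_normc. Qed.

(* For [u = (-'i, y)] with [y] isotropic and nonzero, the reflection sending [u] to
   [(-'i, t conj y)], [t = 1 / (1 + |y|^2)], fixes [ie0] and shrinks [Im y] below 1. *)
Lemma Xi_pair_isotropic u : mdot u u = -1 -> u ord0 0 = - 'i ->
  exists h, preserves_mdot h /\ Xi_pair (h *m ie0) (h *m u).
Proof.
move=> uu u0.
set N := \sum_(j < n.+1) (Re (u (lift ord0 j) 0) ^+ 2 + Im (u (lift ord0 j) 0) ^+ 2).
have ImN : \sum_(j < n.+1) Im (u (lift ord0 j) 0) ^+ 2 <= N.
  by apply: ler_sum => j _; rewrite lerDr sqr_ge0.
have [N0|N_neq0] := eqVneq N 0.
  exists 1%:M; split; first exact: preserves_mdot1.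
  by rewrite !mul1mx; apply: Xi_pair_ie0 => //; rewrite (le_lt_trans ImN) // N0 ltr01.
have N_gt0 : 0 < N by rewrite lt_def N_neq0 sumr_ge0 // => j _; rewrite addr_ge0 ?sqr_ge0.
set t := (1 + N)^-1.
have t_gt0 : 0 < t by rewrite invr_gt0 addr_gt0 ?ltr01.
have tN : t * (1 + N) = 1 by rewrite mulVf // gt_eqF // addr_gt0 ?ltr01.
set m : 'cV[C]_(1 + n.+1) := \col_i (if i == ord0 then - 'i else t%:C * (u i 0)^*).
have m0 : m ord0 0 = - 'i by rewrite mxE eqxx.
have mj j : m (lift ord0 j) 0 = t%:C * (u (lift ord0 j) 0)^* by rewrite mxE lift0_neq0.
have mm : mdot m m = -1.
  rewrite /mdot m0 mulrNN mulii.
  have -> : \sum_(j < n.+1) m (lift ord0 j) 0 * m (lift ord0 j) 0 =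
      t%:C * t%:C * (\sum_(j < n.+1) u (lift ord0 j) 0 * u (lift ord0 j) 0)^*.
    by rewrite rmorph_sum mulr_sumr; apply: eq_bigr => j _; rewrite !mj rmorphM /=; ring.
  by rewrite isotropic_spatial // rmorph0 mulr0 subr0.
have um : mdot u m = -1 - t%:C * N%:C.
  rewrite /mdot u0 m0 mulrNN mulii rmorph_sum mulr_sumr; congr (_ - _).
  by apply: eq_bigr => j _; rewrite mj mulrCA mul_conjc.
have [h [Hh hu hie]] : exists h, [/\ preserves_mdot h, h *m u = m & h *m ie0 = ie0].
  apply: reflection_swap_fix; first by rewrite uu mm.
    have -> : mdot (u - m) (u - m) = (2 * (t * N))%:C by rewrite mdotBB uu mm um !rmorphM; ring.
    by rewrite fmorph_eq0 !mulf_neq0 ?pnatr_eq0 ?gt_eqF.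
  by rewrite mdotC mdotBr !mdot_ie0 m0 u0 subrr.
exists h; split => //; rewrite hie hu; apply: Xi_pair_ie0 => //.
rewrite (eq_bigr (fun j => t ^+ 2 * Im (u (lift ord0 j) 0) ^+ 2)) -?mulr_sumr; last first.
  by move=> j _; rewrite mj ImM Im_conjc /= mul0r addr0 mulrN sqrrN exprMn.
have : t ^+ 2 * \sum_(j < n.+1) Im (u (lift ord0 j) 0) ^+ 2 <= t ^+ 2 * N.
  by rewrite ler_wpM2l ?sqr_ge0.
nra.
Qed.

Lemma half_line_N1 : in_half_line (-1 : C).
Proof. by split => //=; rewrite oppr0. Qed.

Lemma exists_Xi_pair_ie0 u : mdot u u = -1 -> ~ in_half_line (mdot ie0 u) ->
  exists h, preserves_mdot h /\ Xi_pair (h *m ie0) (h *m u).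
Proof.
move=> uu hc; have [u2|nz] := eqVneq (u ord0 0 ^+ 2 + 1) 0; last first.
  exact: Xi_pair_nondegenerate.
apply: Xi_pair_isotropic => //.
have : ('i * u ord0 0) ^+ 2 == 1.
  have u2' : u ord0 0 ^+ 2 = -1 by rewrite -[LHS](addrK 1) u2 sub0r.
  by rewrite exprMn expr2 mulii u2' mulrNN mulr1.
rewrite sqrf_eq1 => /orP [/eqP/mulr1_eq <- | /eqP iu]; first exact: invi.
by exfalso; apply: hc; rewrite mdot_ie0 iu; exact: half_line_N1.
Qed.

Lemma exists_Xi_pair z u : dSC z -> dSC u -> ~ in_half_line (betaC z u) ->
  exists h, preserves_mdot h /\ Xi_pair (h *m z) (h *m u).
Proof.
move=> zz uu hc.
have [h1 [H1 h1z]] : exists h, preserves_mdot h /\ h *m z = ie0.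
  have ie0ie0 : mdot ie0 ie0 = -1 := (XiPlus_ie0 R n).1.
  by apply: mdot_transitive; rewrite ie0ie0 ?zz // oppr_eq0 oner_eq0.
have [h2 [H2 X]] : exists h, preserves_mdot h /\ Xi_pair (h *m ie0) (h *m (h1 *m u)).
  by apply: exists_Xi_pair_ie0; rewrite -?h1z H1.
by exists (h2 *m h1); split; [exact: preserves_mdotM | rewrite -!mulmxA h1z].
Qed.

End StandardPosition.

Definition in_GXi2 (R : realType) (d : nat) (z w : 'cV[R[i]]_(1 + d)) : Prop :=
  exists (g : 'M[R[i]]_(1 + d)) (z1 w1 : 'cV[R[i]]_(1 + d)),
    SOC g /\ XiPlus z1 /\ XiPlus w1 /\ z = g *m z1 /\ w = conjm g *m w1.

Section Orbit.
Variables (R : realType) (n : nat).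
Local Notation C := R[i].
Implicit Types (x z w : 'cV[C]_(1 + n.+1)) (h : 'M[C]_(1 + n.+1)).

Lemma conjv_flip1 x : conjv (flip1 *m x) = flip1 *m conjv x.
Proof.
apply/matrixP => i j; rewrite [j]ord1 [LHS]mxE !flip1E mxE rmorphM /=.
by case: ifP; rewrite ?rmorphN rmorph1.
Qed.

Lemma XiPlus_flip1 x : XiPlus x -> XiPlus (flip1 *m x).
Proof.
case=> xx [I0 II]; split; first exact: dSC_mulmx (@preserves_mdot_flip1 _ n) xx.
have -> : Imv (flip1 *m x) = flip1 *m Imv x.
  apply/matrixP => i j; rewrite [j]ord1 [LHS]mxE !flip1E mxE.
  by case: ifP; rewrite ?mulN1r ?mul1r // raddfN.
split; first by rewrite flip1E [ord0 == _]eq_sym lift0_neq0 mul1r.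
by rewrite betaRE preserves_mdot_flip1.
Qed.

(* Composing with [flip1] corrects the determinant without leaving [Xi_+]. *)
Lemma in_GXi2_of_Xi_pair z w h :
  preserves_mdot h -> Xi_pair (h *m z) (h *m conjv w) -> in_GXi2 z w.
Proof.
wlog det1 : h / \det h = 1.
  move=> Hw Hh X; have /eqP := det_preserves_mdot Hh.
  rewrite sqrf_eq1 => /orP [/eqP deth|/eqP deth]; first exact: Hw deth Hh X.
  apply: (Hw (flip1 *m h)); first by rewrite det_mulmx det_flip1 deth mulrNN mulr1.
    exact: preserves_mdotM (@preserves_mdot_flip1 _ n) Hh.
  by case: X => X1 X2; split; rewrite -mulmxA ?conjv_flip1; apply: XiPlus_flip1.
move=> Hh [X1 X2]; have hu : h \in unitmx by rewrite unitmxE det1 unitr1.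
exists (invmx h), (h *m z), (conjv (h *m conjv w)); split; last split => //.
  split; first by rewrite det_inv det1 invr1.
  by move=> x y; rewrite !betaCE -[in RHS](mulKVmx hu x) -[in RHS](mulKVmx hu y) Hh.
split => //; split; first by rewrite mulKmx.
by rewrite conjm_mulmx conjvK mulKmx // conjvK.
Qed.

End Orbit.

Theorem mainTheorem4 (R : realType) (d : nat) (hd : (1 <= d)%N)
    (z w : 'cV[R[i]]_(1 + d)) :
  (exists (g : 'M[R[i]]_(1 + d)) (z1 w1 : 'cV[R[i]]_(1 + d)),
      SOC g /\ XiPlus z1 /\ XiPlus w1 /\
      z = g *m z1 /\ w = conjm g *m w1)
  <->
  (dSC z /\ dSC w /\ ~ in_half_line (betaC z (conjv w))).
Proof.
split=> [[g [z1 [w1 [[_ Hg] [X1 [X2 [-> ->]]]]]]] | [zz [ww hc]]].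
  split; first exact: dSC_mulmx Hg X1.1.
  split; first by rewrite conjm_mulmx; apply/dSC_conjv/dSC_mulmx/dSC_conjv/X2.1.
  by rewrite conjm_mulmx conjvK Hg; exact: XiPlus_not_half_line.
case: d hd z w zz ww hc => [//|n] _ z w zz ww hc.
have [h [Hh X]] := exists_Xi_pair zz (dSC_conjv ww) hc.
exact: in_GXi2_of_Xi_pair Hh X.
Qed.
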